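(* Let $n$ be a positive integer, $\pi_1,\pi_2\in\mathrm{NC}_B(n)$, $\psi(\pi_1)=(\sigma_1,x_1)$ and $\psi(\pi_2)=(\sigma_2,x_2)$. Then $\pi_1\le\pi_2$ if and only if $\sigma_1\le\sigma_2$ and one of the following holds: (1) $x_1=x_2=\emptyset$; (2) $x_2$ is an edge $(a,b)$ of $\sigma_2$, and $x_1$ is the unique minimal length edge $(i,j)$ of $\sigma_1$ with $i\le a<b\le j$ if such an edge exists, and $x_1=\emptyset$ otherwise; (3) $x_2$ is a block of $\sigma_2$ and $x_1$ is a block of $\sigma_1$ with $x_1\subseteq x_2$; (4) $x_2$ is a block of $\sigma_2$ and $x_1$ is an edge $(i,j)$ of $\sigma_1$ with $i,j\in x_2$; (5) $x_2$ is a block of $\sigma_2$, and $x_1$ is the minimal length edge $(i,j)$ of $\sigma_1$ with $i<\min(x_2)\le\max(x_2)<j$ if such an edge exists, and $x_1=\emptyset$ otherwise.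
   Context: $[\pm n]=\{1,\dots,n,-1,\dots,-n\}$. A partition of type $B_n$ is a partition $\pi$ of $[\pm n]$ such that $-B$ is a block whenever $B$ is, with at most one block (zero block) satisfying $B=-B$; it is noncrossing if, in the linear order $1<\cdots<n<-1<\cdots<-n$, there are no $a<b<c<d$ with $a,c$ in one block and $b,d$ in another. $\mathrm{NC}_B(n)$ is the set of these, ordered by refinement; $\mathrm{NC}(n)$ is the poset of noncrossing partitions of $[n]$ ordered by refinement. An edge of $\sigma\in\mathrm{NC}(n)$ is a pair $(i,j)$, $i<j$, with $i,j$ in a common block containing no integer strictly between them; its length is $j-i$. The map $\psi$: given $\pi\in\mathrm{NC}_B(n)$, let $\eta\in\mathrm{NC}(n)$ be obtained by deleting all negative integers from the blocks of $\pi$ (discarding empty sets), and let $X$ be the set of blocks $A$ of $\eta$ such that the block of $\pi$ containing $A$ also contains a negative integer. Write $X=\{A_1,\dots,A_m\}$ with $\max A_1<\cdots<\max A_m$. Let $\sigma$ be obtained from $\eta$ by merging $A_i$ and $A_{m+1-i}$ for $i=1,\dots,\lfloor m/2\rfloor$, and let $x=\emptyset$ if $m=0$, $x=(\max A_{m/2},\min A_{m/2+1})$ if $m>0$ is even, and $x=A_{(m+1)/2}$ if $m$ is odd. Then $\psi(\pi)=(\sigma,x)$. *)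

From mathcomp Require Import all_boot all_order.
Set Implicit Arguments. Unset Strict Implicit. Unset Printing Implicit Defensive.

(* Encodings.
   - [n] = {1,...,n} is encoded by 'I_n : the ordinal k stands for k+1.
   - [+-n] = {1,...,n,-1,...,-n} is encoded by 'I_(n+n) following the
     linear order 1 < ... < n < -1 < ... < -n : the ordinal k < n stands
     for k+1 and the ordinal k >= n stands for -(k-n+1).  Hence the order
     on ordinals is exactly the linear order used for noncrossingness.   *)

Definition labelB (n : nat) (k : nat) : nat * bool :=
  (* (absolute value, is_negative) of the element encoded by k *)
  if k < n then (k.+1, false) else ((k - n).+1, true).

Definition negB_nat (n k : nat) : nat := if k < n then k + n else k - n.

Lemma negB_nat_lt n (k : 'I_(n + n)) : negB_nat n k < n + n.
Proof.
rewrite /negB_nat; case: ifP => h; first by rewrite ltn_add2r.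
by apply: leq_ltn_trans (leq_subr _ _) (ltn_ord k).
Qed.

Definition negB n (k : 'I_(n + n)) : 'I_(n + n) := Ordinal (negB_nat_lt k).

Definition noncrossing m (P : {set {set 'I_m}}) : Prop :=
  forall B1 B2, B1 \in P -> B2 \in P -> B1 != B2 ->
  forall a b c d : 'I_m, a < b -> b < c -> c < d ->
    a \in B1 -> c \in B1 -> b \in B2 -> d \in B2 -> False.

Definition refines m (P Q : {set {set 'I_m}}) : Prop :=
  forall B, B \in P -> exists2 C, C \in Q & B \subset C.

Definition is_NC n (P : {set {set 'I_n}}) : Prop :=
  partition P [set: 'I_n] /\ noncrossing P.

Definition is_NCB n (P : {set {set 'I_(n + n)}}) : Prop :=
  [/\ partition P [set: 'I_(n + n)],
      (forall B, B \in P -> [set negB x | x in B] \in P),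
      (forall B1 B2, B1 \in P -> B2 \in P ->
          [set negB x | x in B1] = B1 -> [set negB x | x in B2] = B2 -> B1 = B2)
    & noncrossing P].

(* max / min of a (nonempty) subset of 'I_n, as natural numbers (0-based). *)
Definition maxs n (A : {set 'I_n}) : nat := \max_(i in A) (i : nat).
Definition mins n (A : {set 'I_n}) : nat := \big[minn/n]_(i in A) (i : nat).

(* The second component of psi: empty, an edge (a,b) (0-based values),
   or a block. *)
Inductive xdata (n : nat) : Type :=
  | XEmpty
  | XEdge of nat & nat
  | XBlock of {set 'I_n}.
Arguments XEmpty {n}.
Arguments XEdge {n}.

Section Psi.
Variables (n : nat) (P : {set {set 'I_(n + n)}}).

Definition posB (B : {set 'I_(n + n)}) : {set 'I_n} :=
  [set j : 'I_n | lshift n j \in B].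

Definition psi_eta : {set {set 'I_n}} := [set posB B | B in P] :\ set0.

Definition psi_X : {set {set 'I_n}} :=
  [set A in psi_eta |
     [exists B in P, (posB B == A) && [exists i in B, n <= (i : nat)]]].

(* X = {A_1,...,A_m} sorted by increasing max; psi_seq`_k = A_(k+1) *)
Definition psi_seq : seq {set 'I_n} :=
  sort (fun A B => maxs A <= maxs B) (enum psi_X).

Definition psi_m : nat := size psi_seq.

Definition psiA (k : nat) : {set 'I_n} := nth set0 psi_seq k.

(* sigma: merge A_i and A_(m+1-i) for i = 1..floor(m/2); the unpaired
   middle block (m odd) is kept.  Taking all k < m is the same, since the
   pairs {k, m-1-k} are symmetric and the middle gives A ∪ A = A. *)
Definition psi_sigma : {set {set 'I_n}} :=
  (psi_eta :\: psi_X) :|: [set psiA k :|: psiA (psi_m.-1 - k) | k : 'I_psi_m].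

Definition psi_x : xdata n :=
  if psi_m == 0 then XEmpty
  else if odd psi_m then XBlock (psiA psi_m./2)
  else XEdge (maxs (psiA (psi_m./2).-1)) (mins (psiA psi_m./2)).

End Psi.

Definition is_edge n (S : {set {set 'I_n}}) (i j : nat) : Prop :=
  i < j /\
  exists2 B, B \in S &
    [/\ exists i' : 'I_n, i' = i :> nat /\ i' \in B,
        exists j' : 'I_n, j' = j :> nat /\ j' \in B
      & forall k : 'I_n, k \in B -> ~ (i < k /\ k < j)].

Definition unique_min_edge_or_empty n (S : {set {set 'I_n}})
    (Q : nat -> nat -> Prop) (x : xdata n) : Prop :=
  ((~ exists i j, is_edge S i j /\ Q i j) /\ x = XEmpty) \/
  (exists i j, [/\ x = XEdge i j, is_edge S i j, Q i j &
     forall k l, is_edge S k l -> Q k l -> (k, l) <> (i, j) -> j - i < l - k]).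

Definition min_edge_or_empty n (S : {set {set 'I_n}})
    (Q : nat -> nat -> Prop) (x : xdata n) : Prop :=
  ((~ exists i j, is_edge S i j /\ Q i j) /\ x = XEmpty) \/
  (exists i j, [/\ x = XEdge i j, is_edge S i j, Q i j &
     forall k l, is_edge S k l -> Q k l -> j - i <= l - k]).

From mathcomp Require Import all_boot all_order zify.
Set Implicit Arguments. Unset Strict Implicit. Unset Printing Implicit Defensive.

(* For pi in NC_B(n) write i ~ j when i and j share a block of pi, and i ~ -j when
   i and -j do.  Both are relations on [n], their union is the block relation of
   sigma, and pi1 <= pi2 iff both relations of pi1 are contained in those of pi2.
   The blocks of eta meeting the negatives are exchanged by negation, and
   noncrossingness forces A_1, ..., A_m to lie one after the other, so that A_i is
   paired with A_(m+1-i).  Hence, for i <= j in one block of sigma, i ~ -j holds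
   exactly on a region read off from x: nowhere if x is empty, for i <= a < b <= j
   if x is the edge (a, b), and for i, j in x or i < min x <= max x < j if x is a
   block.  Given sigma1 <= sigma2, refinement becomes an inclusion between the
   regions of x1 and x2, and the nesting of edges of the noncrossing partition
   sigma1 turns this inclusion into conditions (1)-(5). *)

Section MinMax.
Variables (n : nat) (B : {set 'I_n}).

Lemma leq_maxs (x : 'I_n) : x \in B -> x <= maxs B.
Proof. by move=> h; apply: (leq_bigmax_cond (F := fun i : 'I_n => (i : nat))). Qed.

Lemma maxs_mem (x : 'I_n) : x \in B -> exists2 y : 'I_n, y \in B & maxs B = y.
Proof.
move=> hx; have : 0 < #|B| by apply/card_gt0P; exists x.
by move/(eq_bigmax_cond (fun i : 'I_n => (i : nat))) => [y hy e]; exists y.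
Qed.

Lemma geq_mins (x : 'I_n) : x \in B -> mins B <= x.
Proof.
move=> h; rewrite /mins -big_filter.
have : x \in [seq i <- index_enum 'I_n | i \in B] by rewrite mem_filter h mem_index_enum.
elim: [seq i <- index_enum 'I_n | i \in B] => // y l IH.
rewrite in_cons big_cons => /orP[/eqP ->|hl]; first exact: geq_minl.
exact: leq_trans (geq_minr _ _) (IH hl).
Qed.

Lemma mins_mem (x : 'I_n) : x \in B -> exists2 y : 'I_n, y \in B & mins B = y.
Proof.
move=> hx.
suff [|//] : mins B = n \/ exists2 y : 'I_n, y \in B & mins B = y.
  by move=> hn; have := geq_mins hx; rewrite hn; have := ltn_ord x; lia.
rewrite /mins; elim/big_ind: _ => [|a b ha hb|y hy]; [by left | | by right; exists y].
by rewrite /minn; case: ifP.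
Qed.

End MinMax.

Lemma decreasing_rev (g : nat -> nat) m : (forall k, k < m -> g k < m) ->
  (forall k l, k < l -> l < m -> g l < g k) -> forall k, k < m -> g k = m.-1 - k.
Proof.
move=> g_lt g_decr.
have le_g0 k : k < m -> g k + k <= g 0.
  elim: k => [|k IH] hk; first by rewrite addn0.
  by have := g_decr k k.+1 (ltnSn k) hk; have := IH (ltnW hk); lia.
have ge_rev t : t < m -> t <= g (m.-1 - t).
  elim: t => [|t IH] ht //.
  by have := g_decr (m.-1 - t.+1) (m.-1 - t) ltac:(lia) ltac:(lia); have := IH (ltnW ht); lia.
move=> k hk; have := le_g0 k hk; have := g_lt 0 ltac:(lia); have := ge_rev (m.-1 - k) ltac:(lia).
by rewrite (_ : m.-1 - (m.-1 - k) = k); lia.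
Qed.

Definition noncrossing_equiv n (r : rel 'I_n) :=
  [/\ reflexive r, symmetric r, transitive r &
      forall a b c d : 'I_n, a < b -> b < c -> c < d -> r a c -> r b d -> r a b].

Section NoncrossingRelation.
Variables (n : nat) (r : rel 'I_n).
Hypothesis r_nce : noncrossing_equiv r.

Let r_refl : reflexive r. Proof. by case: r_nce. Qed.
Let r_sym : symmetric r. Proof. by case: r_nce. Qed.
Let r_trans : transitive r. Proof. by case: r_nce. Qed.
Let r_nc : forall a b c d : 'I_n, a < b -> b < c -> c < d -> r a c -> r b d -> r a b.
Proof. by case: r_nce. Qed.

Definition redge (i j : 'I_n) := [/\ i < j, r i j & forall k, r i k -> ~~ (i < k < j)].

Definition rclass (Z : {set 'I_n}) := forall z w, z \in Z -> (w \in Z) = r z w.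

Lemma redge_sep (a b i t : 'I_n) : redge a b -> r i t -> i <= a -> t <= a \/ b <= t.
Proof.
case=> hab rab no_mid hit hia.
case: (leqP t a) => h1; first by left.
case: (leqP b t) => h2; first by right.
have ria : r i a.
  case: (ltngtP i a) => [h|h|/val_inj->//]; last lia.
  exact: r_nc h h1 h2 hit rab.
have rat : r a t by apply: r_trans hit; rewrite r_sym.
by have := no_mid t rat; rewrite h1 h2.
Qed.

Lemma redge_between (i j : 'I_n) (a b : nat) : r i j -> i <= a -> a < b -> b <= j ->
  (forall t, r i t -> t <= a \/ b <= t) ->
  exists k l, [/\ redge k l, i <= k, k <= a, b <= l & l <= j].
Proof.
move=> rij hia hab hbj sep.
have [k /andP[rik hka] k_max] :=
  @arg_maxnP _ i (fun t => r i t && (t <= a)) (@nat_of_ord n) ltac:(by rewrite /= r_refl hia).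
have [l /andP[ril hbl] l_min] :=
  @arg_minnP _ j (fun t => r i t && (b <= t)) (@nat_of_ord n) ltac:(by rewrite /= rij hbj).
exists k, l; split=> //.
- split; [lia | by apply: r_trans ril; rewrite r_sym |].
  move=> t rkt; apply/negP => /andP[hkt htl]; have rit := r_trans rik rkt.
  by case: (sep t rit) => h; [have := k_max t | have := l_min t]; rewrite rit h => /(_ isT); lia.
- by have := k_max i; rewrite r_refl hia => /(_ isT).
- by have := l_min j; rewrite rij hbj => /(_ isT).
Qed.

Lemma redge_nested (k l k' l' : 'I_n) : redge k l -> redge k' l' -> k < l' -> k' < l ->
  (k <= k' /\ l' <= l) \/ (k' <= k /\ l <= l').
Proof.
have inner (u v u' v' : 'I_n) : redge u v -> redge u' v' -> u <= u' -> u' < v -> v' <= v.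
  case=> huv ruv no_mid [huv' ruv' no_mid'] huu hu'v.
  case: (leqP v' v) => // hvv; case: (ltngtP u u') => [h|h|/val_inj e].
  - by have := no_mid u' (r_nc h hu'v hvv ruv ruv'); rewrite h hu'v.
  - lia.
  - by subst u'; have := no_mid' v ruv; rewrite huv hvv.
move=> e e' h h'; case: (leqP k k') => hk; first by left; split; last exact: inner e e' hk h'.
by right; split; [exact: ltnW | exact: inner e' e (ltnW hk) h].
Qed.

Section Class.
Variable Z : {set 'I_n}.
Hypothesis Z_class : rclass Z.

Lemma class_sep i t : r i t -> i < mins Z -> t < mins Z \/ maxs Z < t.
Proof.
move=> rit hi; case: (ltnP t (mins Z)) => h1; first by left.
case: (ltnP (maxs Z) t) => h2; first by right.
exfalso; have [Z0|[z0 hz0]] := set_0Vmem Z.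
  by move: h1; rewrite Z0 /mins big_set0; have := ltn_ord t; lia.
have iNZ w : w \in Z -> r w i -> False.
  move=> hw rwi; have /geq_mins : i \in Z by rewrite (Z_class _ hw).
  lia.
have [zm hzm ezm] := mins_mem hz0; have [zM hzM ezM] := maxs_mem hz0.
case: (boolP (t \in Z)) => ht; first by apply: (iNZ t ht); rewrite r_sym.
have ne w : w \in Z -> w != t :> nat by move=> hw; apply: contraNneq ht => /val_inj <-.
have [nm nM] := (ne _ hzm, ne _ hzM).
apply: (iNZ zm hzm); rewrite r_sym; apply: (r_nc (c := t) (d := zM)); try lia.
by rewrite -(Z_class _ hzm).
Qed.

Lemma class_enclosed z i j : z \in Z -> r i j -> i < z -> z < j -> ~~ r i z ->
  i < mins Z /\ maxs Z < j.
Proof.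
move=> hz rij hiz hzj nriz.
suff inside w : w \in Z -> i < w < j.
  have [y hy ->] := mins_mem hz; have [y' hy' ->] := maxs_mem hz.
  by have /andP[? _] := inside y hy; have /andP[_ ?] := inside y' hy'.
rewrite (Z_class _ hz) => rzw; apply: contraNT nriz; rewrite negb_and -!leqNgt.
case/orP=> [hwi|hjw].
- case: (ltngtP w i) hwi => [hwi _|//|/val_inj <- _]; last by rewrite r_sym.
  have rwi : r w i by apply: r_nc hwi hiz hzj _ rij; rewrite r_sym.
  by apply: (@r_trans w); rewrite r_sym.
- case: (ltngtP j w) hjw => [hjw _|//|/val_inj e _]; first exact: r_nc hiz hzj hjw rij rzw.
  by subst w; apply: r_trans rij _; rewrite r_sym.
Qed.

End Class.

End NoncrossingRelation.

(* For i <= j in one block of sigma, [region (psi_x P) i j] tells whether i and -j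
   share a block of P (lemma cross_linked_region). *)
Definition region n (x : xdata n) (i j : 'I_n) : bool :=
  match x with
  | XEmpty => false
  | XEdge a b => (i <= a) && (b <= j)
  | XBlock Z => (i \in Z) && (j \in Z) || (i < mins Z) && (maxs Z < j)
  end.

Section TypeBPartition.
Variables (n : nat) (P : {set {set 'I_(n + n)}}).
Hypothesis P_NCB : is_NCB P.

Lemma P_cover u : u \in cover P.
Proof. by case: P_NCB => /and3P[/eqP -> _ _]; rewrite inE. Qed.

Lemma pblockP u : pblock P u \in P.
Proof. exact: pblock_mem (P_cover u). Qed.

Lemma pblock_self u : u \in pblock P u.
Proof. by rewrite mem_pblock P_cover. Qed.

Lemma pblock_eq B u : B \in P -> u \in B -> pblock P u = B.
Proof. by case: P_NCB => /and3P[_ trivP _] _ _ _; apply: def_pblock. Qed.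

Definition same_block (u v : 'I_(n + n)) := v \in pblock P u.

Lemma same_blockE u v : same_block u v = (pblock P u == pblock P v).
Proof. by case: P_NCB => /and3P[_ trivP _] _ _ _; rewrite /same_block eq_pblock // P_cover. Qed.

Lemma same_block_refl : reflexive same_block.
Proof. exact: pblock_self. Qed.

Lemma same_block_sym : symmetric same_block.
Proof. by move=> u v; rewrite !same_blockE eq_sym. Qed.

Lemma same_block_trans : transitive same_block.
Proof. by move=> v u w; rewrite !same_blockE => /eqP ->. Qed.

Lemma same_block_nc (u v w x : 'I_(n + n)) : u < v -> v < w -> w < x ->
  same_block u w -> same_block v x -> same_block u v.
Proof.
move=> uv vw wx uw vx; rewrite same_blockE; apply/negPn/negP => ne.
case: P_NCB => _ _ _ /(_ _ _ (pblockP u) (pblockP v) ne u v w x uv vw wx).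
by apply; rewrite ?pblock_self.
Qed.

Lemma negBK : involutive (@negB n).
Proof.
move=> u; apply: val_inj => /=; rewrite /negB_nat.
by have := ltn_ord u; case: (ltnP u n) => h1 h2; [rewrite ifF | rewrite ifT]; lia.
Qed.

Lemma same_block_negB u v : same_block (negB u) (negB v) = same_block u v.
Proof.
case: P_NCB => _ neg_block _ _; rewrite /same_block.
have -> : pblock P (negB u) = [set negB x | x in pblock P u].
  by apply: pblock_eq; [exact: neg_block (pblockP u) | exact: imset_f (pblock_self u)].
by rewrite mem_imset //; apply: can_inj negBK.
Qed.

Definition posI (i : 'I_n) : 'I_(n + n) := lshift n i.
Definition negI (i : 'I_n) : 'I_(n + n) := rshift n i.

Lemma negB_posI i : negB (posI i) = negI i.
Proof. by apply: val_inj => /=; rewrite /negB_nat ltn_ord addnC. Qed.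

Lemma negB_negI i : negB (negI i) = posI i.
Proof. by rewrite -negB_posI negBK. Qed.

Lemma posI_or_negI u : (exists i, u = posI i) \/ (exists i, u = negI i).
Proof. by case: (splitP u) => j hj; [left | right]; exists j; apply: val_inj. Qed.

Definition linked (i j : 'I_n) := same_block (posI i) (posI j).
Definition cross_linked (i j : 'I_n) := same_block (posI i) (negI j).

Lemma linked_refl : reflexive linked.
Proof. by move=> i; apply: same_block_refl. Qed.

Lemma linked_sym : symmetric linked.
Proof. by move=> i j; apply: same_block_sym. Qed.

Lemma linked_trans : transitive linked.
Proof. by move=> j i k; apply: same_block_trans. Qed.

Lemma cross_linked_sym : symmetric cross_linked.
Proof.
by move=> i j; rewrite /cross_linked -[LHS]same_block_negB negB_posI negB_negI same_block_sym.
Qed.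

Lemma linked_cross i j k : linked i j -> cross_linked j k -> cross_linked i k.
Proof. exact: same_block_trans. Qed.

Lemma cross_linked_linked i j k : cross_linked i j -> linked j k -> cross_linked i k.
Proof.
move=> ij jk; rewrite cross_linked_sym; apply: (@linked_cross _ j); first by rewrite linked_sym.
by rewrite cross_linked_sym.
Qed.

Lemma cross_linked2 i j k : cross_linked i j -> cross_linked j k -> linked i k.
Proof.
move=> hij hjk; apply: same_block_trans hij _.
by rewrite same_block_sym -/(cross_linked k j) (cross_linked_sym k j).
Qed.

Lemma linked_cross_self i j : linked i j -> cross_linked i j -> cross_linked i i.
Proof. by move=> lij cij; apply: linked_cross lij _; rewrite cross_linked_sym. Qed.

Lemma linked_nc (a b c d : 'I_n) : a < b -> b < c -> linked a c -> cross_linked b d -> linked a b.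
Proof.
move=> ab bc ac bd; apply: (same_block_nc (w := posI c) (x := negI d)) => //=.
by have := ltn_ord c; lia.
Qed.

Lemma cross_linked_nc (a b c d : 'I_n) : a < b -> c < d ->
  cross_linked a c -> cross_linked b d -> linked a b.
Proof.
move=> ab cd ac bd; apply: (same_block_nc (w := negI c) (x := negI d)) => //=.
- by have := ltn_ord b; lia.
- by rewrite ltn_add2l.
Qed.

Definition pclass i := [set j | linked i j].
Definition meets_neg i := [exists j, cross_linked i j].

Lemma mem_pclass i j : (j \in pclass i) = linked i j.
Proof. by rewrite inE. Qed.

Lemma pclass_eq i j : linked i j -> pclass i = pclass j.
Proof.
move=> lij; apply/setP => k; rewrite !inE; apply/idP/idP; last exact: linked_trans.
by apply: linked_trans; rewrite linked_sym.
Qed.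

Lemma meets_neg_linked i j : linked i j -> meets_neg i -> meets_neg j.
Proof.
move=> lij /existsP[k hk]; apply/existsP; exists k.
by apply: linked_cross hk; rewrite linked_sym.
Qed.

Lemma posB_pblock i : posB (pblock P (posI i)) = pclass i.
Proof. by apply/setP => j; rewrite !inE. Qed.

Lemma mem_psi_eta S : S \in psi_eta P <-> exists i, S = pclass i.
Proof.
rewrite /psi_eta !inE; split.
- case/andP => + /imsetP[B hB eS]; rewrite eS => /set0Pn[i]; rewrite inE => hi.
  by exists i; rewrite -(pblock_eq hB hi) posB_pblock.
- case=> i ->; apply/andP; split; first by apply/set0Pn; exists i; rewrite inE linked_refl.
  by apply/imsetP; exists (pblock P (posI i)); rewrite ?pblockP ?posB_pblock.
Qed.

Lemma mem_psi_X S : S \in psi_X P <-> exists i, S = pclass i /\ meets_neg i.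
Proof.
rewrite /psi_X inE; split.
- case/andP => /mem_psi_eta[i ->] /existsP[B /and3P[hB /eqP hBi /existsP[u /andP[hu hnu]]]].
  exists i; split => //.
  have hi : posI i \in B by move: (linked_refl i); rewrite -mem_pclass -hBi inE.
  case: (posI_or_negI u) => [[j hj]|[j hj]]; first by move: hnu; rewrite hj /=; have := ltn_ord j; lia.
  by apply/existsP; exists j; rewrite /cross_linked /same_block (pblock_eq hB hi) -hj.
- case=> i [-> /existsP[j hj]]; apply/andP; split; first by apply/mem_psi_eta; exists i.
  apply/existsP; exists (pblock P (posI i)); rewrite pblockP posB_pblock eqxx /=.
  by apply/existsP; exists (negI j); rewrite /= leq_addr andbT.
Qed.

Local Notation m := (psi_m P).
Local Notation A := (psiA P).

Lemma psi_seq_perm : perm_eq (psi_seq P) (enum (psi_X P)).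
Proof. by rewrite /psi_seq perm_sort perm_refl. Qed.

Lemma psiA_X k : k < m -> A k \in psi_X P.
Proof. by move=> hk; rewrite -(mem_enum (mem (psi_X P))) -(perm_mem psi_seq_perm) mem_nth. Qed.

Lemma psiA_inj k l : k < m -> l < m -> A k = A l -> k = l.
Proof.
move=> hk hl e; apply/eqP; rewrite -(nth_uniq set0 hk hl); first exact/eqP.
by rewrite (perm_uniq psi_seq_perm) enum_uniq.
Qed.

Lemma psiA_sorted k l : k <= l -> l < m -> maxs (A k) <= maxs (A l).
Proof.
move=> hkl hl; apply: (sorted_leq_nth (leT := fun A B : {set 'I_n} => maxs A <= maxs B)).
- by move=> ? ? ?; apply: leq_trans.
- by move=> ?; apply: leqnn.
- by apply: sort_sorted => x y; apply: leq_total.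
- by rewrite inE; apply: leq_ltn_trans hl.
- by rewrite inE.
- exact: hkl.
Qed.

Lemma psiA_pclassE k x : k < m -> x \in A k -> A k = pclass x /\ meets_neg x.
Proof.
move=> /psiA_X/mem_psi_X[i [-> hi]]; rewrite mem_pclass => lix.
by split; [apply: pclass_eq | apply: meets_neg_linked hi].
Qed.

Lemma psiA_nonempty k : k < m -> exists x, x \in A k.
Proof. by move=> /psiA_X/mem_psi_X[i [-> _]]; exists i; rewrite mem_pclass linked_refl. Qed.

Lemma psiA_linked k l x y : k < m -> l < m -> x \in A k -> y \in A l -> linked x y -> k = l.
Proof.
move=> hk hl hx hy lxy; apply: psiA_inj => //.
by rewrite (psiA_pclassE hk hx).1 (psiA_pclassE hl hy).1 (pclass_eq lxy).
Qed.

Lemma meets_neg_psiA i : meets_neg i -> exists2 k, k < m & i \in A k.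
Proof.
move=> hi; have : pclass i \in psi_seq P.
  by rewrite (perm_mem psi_seq_perm) mem_enum; apply/mem_psi_X; exists i.
by exists (index (pclass i) (psi_seq P)); rewrite ?index_mem // /psiA nth_index // mem_pclass linked_refl.
Qed.

(* The classes A_k are sorted by their maxima; noncrossingness upgrades this to
   "all of A_k precedes all of A_l". *)
Lemma psiA_lt k l x y : k < l -> l < m -> x \in A k -> y \in A l -> x < y.
Proof.
move=> hkl hl hx hy; have hk := ltn_trans hkl hl.
have unlinked u v : u \in A k -> v \in A l -> ~~ linked u v.
  by move=> hu hv; apply/negP => /(psiA_linked hk hl hu hv) ekl; rewrite ekl ltnn in hkl.
rewrite ltnNge; apply/negP => hyx.
have [x1 hx1 ex1] := maxs_mem hx; have [y1 hy1 ey1] := maxs_mem hy.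
have := psiA_sorted (ltnW hkl) hl; rewrite ex1 ey1 => hxy1.
have := leq_maxs hx; rewrite ex1 => hxx1.
have nx1y1 : x1 != y1 :> nat by apply: contraNneq (unlinked _ _ hx1 hy1) => /val_inj ->; rewrite linked_refl.
have nxy : x != y :> nat by apply: contraNneq (unlinked _ _ hx hy) => /val_inj ->; rewrite linked_refl.
have /existsP[d hd] := (psiA_pclassE hk hx).2.
have lyy1 : linked y y1 by rewrite -mem_pclass -(psiA_pclassE hl hy).1.
apply: (negP (unlinked _ _ hx hy)); rewrite linked_sym.
by apply: (linked_nc (c := y1) (d := d)) => //; lia.
Qed.

Definition partner k : {set 'I_n} :=
  if [pick x in A k] is Some x then [set j | cross_linked x j] else set0.

Lemma partnerE k x : k < m -> x \in A k -> partner k = [set j | cross_linked x j].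
Proof.
move=> hk hx; rewrite /partner; case: pickP => [y hy | /(_ x)]; last by rewrite hx.
have lyx : linked y x by rewrite -mem_pclass -(psiA_pclassE hk hy).1.
apply/setP => j; rewrite !inE; apply/idP/idP; last exact: linked_cross.
by apply: linked_cross; rewrite linked_sym.
Qed.

Definition partner_index k := index (partner k) (psi_seq P).

Lemma partner_indexP k : k < m -> partner_index k < m /\ A (partner_index k) = partner k.
Proof.
move=> hk; have [x hx] := psiA_nonempty hk.
have /existsP[j xj] := (psiA_pclassE hk hx).2.
have : partner k \in psi_seq P.
  rewrite (perm_mem psi_seq_perm) mem_enum (partnerE hk hx); apply/mem_psi_X; exists j; split.
    apply/setP => y; rewrite !inE; apply/idP/idP => [xy | ljy].
      by apply: cross_linked2 xy; rewrite cross_linked_sym.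
    exact: cross_linked_linked xj ljy.
  by apply/existsP; exists x; rewrite cross_linked_sym.
by move=> h; rewrite /partner_index index_mem /psiA nth_index.
Qed.

Lemma partner_lt k l y z : k < l -> l < m -> y \in partner l -> z \in partner k -> y < z.
Proof.
move=> hkl hl hy hz; have hk := ltn_trans hkl hl.
have [x hx] := psiA_nonempty hk; have [x' hx'] := psiA_nonempty hl.
rewrite (partnerE hk hx) inE in hz; rewrite (partnerE hl hx') inE in hy.
have xx' := psiA_lt hkl hl hx hx'.
have : ~~ linked x x'.
  by apply/negP => /(psiA_linked hk hl hx hx') ekl; rewrite ekl ltnn in hkl.
case: (ltngtP y z) => [//|zy|/val_inj ezy]; case/negP.
- exact: cross_linked_nc xx' zy hz hy.
- by apply: cross_linked2 hz _; rewrite cross_linked_sym -ezy.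
Qed.

(* Negation reverses the order of the classes, so A k is paired with A (m.-1 - k):
   A_i with A_(m+1-i) in the 1-based indexing of the paper. *)
Lemma cross_linked_psiA k x j : k < m -> x \in A k -> cross_linked x j = (j \in A (m.-1 - k)).
Proof.
move=> hk hx.
suff -> : m.-1 - k = partner_index k by rewrite (partner_indexP hk).2 (partnerE hk hx) inE.
symmetry; apply: (@decreasing_rev partner_index m) => // [k' /partner_indexP[]//|k' l hkl hl].
have [[hk' ek'] [hl' el']] := (partner_indexP (ltn_trans hkl hl), partner_indexP hl).
have [y] := psiA_nonempty hl'; rewrite el' => hy.
have [z] := psiA_nonempty hk'; rewrite ek' => hz.
have yz := partner_lt hkl hl hy hz.
case: ltngtP => [//|h|e].
- by have := psiA_lt h hl'; rewrite ek' el' => /(_ _ _ hz hy); lia.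
- have hy' : y \in partner k' by rewrite -ek' -e el'.
  by have := partner_lt hkl hl hy hy'; rewrite ltnn.
Qed.

Definition sigma_linked i j := linked i j || cross_linked i j.

Lemma sigma_linked_refl : reflexive sigma_linked.
Proof. by move=> i; rewrite /sigma_linked linked_refl. Qed.

Lemma sigma_linked_sym : symmetric sigma_linked.
Proof. by move=> i j; rewrite /sigma_linked linked_sym cross_linked_sym. Qed.

Lemma sigma_linked_trans : transitive sigma_linked.
Proof.
move=> j i k /orP[ij|ij] /orP[jk|jk]; apply/orP.
- by left; apply: linked_trans jk.
- by right; apply: linked_cross jk.
- by right; apply: cross_linked_linked jk.
- by left; apply: cross_linked2 jk.
Qed.

Lemma sigma_linked_nc (a b c d : 'I_n) : a < b -> b < c -> c < d ->
  sigma_linked a c -> sigma_linked b d -> sigma_linked a b.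
Proof.
move=> ab bc cd /orP[ac|ac] /orP[bd|bd]; apply/orP.
- by left; apply: (same_block_nc (w := posI c) (x := posI d)).
- by left; apply: linked_nc ab bc ac bd.
- right; apply: (same_block_nc (v := negI b) (w := negI c) (x := negI d)) => //=; try lia.
  by rewrite -!negB_posI same_block_negB.
- by left; apply: cross_linked_nc ab _ ac bd; lia.
Qed.

Lemma sigma_linked_nce : noncrossing_equiv sigma_linked.
Proof.
split; [exact: sigma_linked_refl | exact: sigma_linked_sym | exact: sigma_linked_trans |].
exact: sigma_linked_nc.
Qed.

Lemma linkedE i j : sigma_linked i j -> linked i j = ~~ cross_linked i j || cross_linked i i.
Proof.
case/orP=> [lij|cij]; first last.
  by rewrite cij /=; apply/idP/idP => h; [exact: linked_cross_self h cij | exact: cross_linked2 h cij].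
rewrite lij; case: (boolP (cross_linked i j)) => //= cij.
by rewrite (linked_cross_self lij cij).
Qed.

Definition sclass i := [set j | sigma_linked i j].

Lemma psi_sigma_blockE S i : S \in psi_sigma P -> i \in S -> S = sclass i.
Proof.
rewrite /psi_sigma in_setU in_setD => /orP[/andP[notX /mem_psi_eta[x eS]]|/imsetP[k _ ->]] hi.
- subst S; have lxi : linked x i by rewrite -mem_pclass.
  have nm : ~~ meets_neg i.
    by apply: contra notX => hm; apply/mem_psi_X; exists i; split => //; apply: pclass_eq.
  apply/setP => j; rewrite (pclass_eq lxi) !inE /sigma_linked.
  suff -> : cross_linked i j = false by rewrite orbF.
  by apply: contraNF nm => h; apply/existsP; exists j.
- have hk := ltn_ord k; have hk' : m.-1 - k < m by lia.
  apply/setP => j; rewrite !inE /sigma_linked.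
  case/setUP: hi => hi.
  + by rewrite -(cross_linked_psiA _ hk hi) (psiA_pclassE hk hi).1 mem_pclass.
  + rewrite (psiA_pclassE hk' hi).1 mem_pclass (cross_linked_psiA _ hk' hi).
    by rewrite (_ : m.-1 - (m.-1 - k) = k) //; lia.
Qed.

Lemma sclass_psi_sigma i : sclass i \in psi_sigma P.
Proof.
case: (boolP (meets_neg i)) => hm.
- have [k hk hi] := meets_neg_psiA hm.
  have hS : A k :|: A (m.-1 - k) \in psi_sigma P.
    by rewrite /psi_sigma inE; apply/orP; right; apply/imsetP; exists (Ordinal hk).
  by rewrite -(psi_sigma_blockE hS (_ : i \in _)) // inE hi.
- have hS : pclass i \in psi_sigma P.
    rewrite /psi_sigma in_setU in_setD; apply/orP; left; apply/andP; split.
      apply: contra hm => /mem_psi_X[x [e hx]]; apply: meets_neg_linked hx.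
      by rewrite -mem_pclass -e mem_pclass linked_refl.
    by apply/mem_psi_eta; exists i.
  by rewrite -(psi_sigma_blockE hS (_ : i \in _)) // mem_pclass linked_refl.
Qed.

Lemma psi_sigma_rclass Z : Z \in psi_sigma P -> rclass sigma_linked Z.
Proof. by move=> hZ z w hz; rewrite (psi_sigma_blockE hZ hz) inE. Qed.

Lemma is_edge_psi_sigmaE (a b : nat) : is_edge (psi_sigma P) a b <->
  exists i j : 'I_n, [/\ a = i, b = j & redge sigma_linked i j].
Proof.
split.
- case=> ab [B hB [[i [ei hi]] [j [ej hj]] no_mid]]; subst a b; exists i, j; split => //.
  rewrite (psi_sigma_blockE hB hi) inE in hj.
  split => // k rik; apply/negP => /andP[ik kj]; apply: (no_mid k) (conj ik kj).
  by rewrite (psi_sigma_blockE hB hi) inE.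
- case=> i [j [-> -> [ij rij no_mid]]]; split => //; exists (sclass i); first exact: sclass_psi_sigma.
  split; [by exists i; rewrite inE sigma_linked_refl | by exists j; rewrite inE |].
  by move=> k; rewrite inE => /no_mid /negP + [ik kj]; apply; rewrite ik.
Qed.

Lemma psiA_lt_mins k l x : k < l -> l < m -> x \in A k -> x < mins (A l).
Proof.
move=> kl hl hx; have [y0 /mins_mem[y hy ->]] := psiA_nonempty hl.
exact: psiA_lt kl hl hx hy.
Qed.

Lemma maxs_lt_psiA k l y : k < l -> l < m -> y \in A l -> maxs (A k) < y.
Proof.
move=> kl hl hy; have [x0 /maxs_mem[x hx ->]] := psiA_nonempty (ltn_trans kl hl).
exact: psiA_lt kl hl hx hy.
Qed.

Lemma leq_maxs_psiA k l x : k <= l -> l < m -> x \in A k -> x <= maxs (A l).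
Proof.
rewrite leq_eqVlt => /orP[/eqP-> _|kl hl hx]; first exact: leq_maxs.
have [y0 /maxs_mem[y hy ->]] := psiA_nonempty hl.
exact: ltnW (psiA_lt kl hl hx hy).
Qed.

Lemma geq_mins_psiA k l y : k <= l -> l < m -> y \in A l -> mins (A k) <= y.
Proof.
rewrite leq_eqVlt => /orP[/eqP-> _|kl hl hy]; first exact: geq_mins.
have [x0 /mins_mem[x hx ->]] := psiA_nonempty (ltn_trans kl hl).
exact: ltnW (psiA_lt kl hl hx hy).
Qed.

Lemma cross_linked_psiA_index i j : cross_linked i j -> i <= j ->
  exists k, [/\ k <= m.-1 - k, m.-1 - k < m, i \in A k & j \in A (m.-1 - k)].
Proof.
move=> ij le_ij; have [k hk hi] := meets_neg_psiA (introT existsP (ex_intro _ j ij)).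
have hj : j \in A (m.-1 - k) by rewrite -(cross_linked_psiA _ hk hi).
exists k; split => //; last lia.
by rewrite leqNgt; apply/negP => lt_k; have := psiA_lt lt_k hk hj hi; lia.
Qed.

Lemma cross_linked_m0 i j : m = 0 -> cross_linked i j = false.
Proof.
by move=> m0; apply/negP => ij; have [k] := meets_neg_psiA (introT existsP (ex_intro _ j ij)); rewrite m0.
Qed.

Lemma cross_linked_odd i j : odd m -> sigma_linked i j -> i <= j ->
  cross_linked i j = region (XBlock (A m./2)) i j.
Proof.
move=> om rij le_ij; have := odd_double_half m; rewrite om -addnn /= => em.
have hc : m./2 < m by lia.
have mc : m.-1 - m./2 = m./2 by lia.
apply/idP/idP => [/cross_linked_psiA_index-/(_ le_ij)[k [kk hk' hi hj]] | ].
  case: (ltngtP k m./2) => [kc|ck|ekc]; [apply/orP; right | lia | by subst k; rewrite mc in hj; rewrite hi hj].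
  by rewrite (psiA_lt_mins kc hc hi) (maxs_lt_psiA _ hk' hj) //; lia.
case/orP => /andP[hi hj]; first by rewrite (cross_linked_psiA _ hc hi) mc.
case/orP: rij => // lij; exfalso.
have [z0 /mins_mem[z hz ez]] := psiA_nonempty hc.
have zz : cross_linked z z by rewrite (cross_linked_psiA _ hc hz) mc.
have := leq_maxs hz => zM.
have liz : linked i z by apply: linked_nc lij zz; lia.
have /geq_mins : i \in A m./2 by rewrite (psiA_pclassE hc hz).1 mem_pclass linked_sym.
lia.
Qed.

Section EvenM.
Hypotheses (m_neq0 : m != 0) (m_even : ~~ odd m).

Let c := m./2.
Let em : m = c.*2. Proof. by have := odd_double_half m; rewrite (negbTE m_even). Qed.
Let hc : c < m. Proof. lia. Qed.
Let hc' : c.-1 < m. Proof. lia. Qed.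
Let mc : m.-1 - c.-1 = c. Proof. lia. Qed.

Lemma psi_x_edge_ends : exists a b : 'I_n,
  [/\ a \in A c.-1, b \in A c, maxs (A c.-1) = a & mins (A c) = b].
Proof.
have [a0 /maxs_mem[a ha ea]] := psiA_nonempty hc'.
have [b0 /mins_mem[b hb eb]] := psiA_nonempty hc.
by exists a, b.
Qed.

Lemma cross_linked_even i j : sigma_linked i j -> i <= j ->
  cross_linked i j = region (XEdge (maxs (A c.-1)) (mins (A c))) i j.
Proof.
move=> rij le_ij; apply/idP/idP => [/cross_linked_psiA_index-/(_ le_ij)[k [kk hk' hi hj]] | ].
  rewrite /= (leq_maxs_psiA _ hc' hi) ?(geq_mins_psiA _ hk' hj) //; lia.
case/andP=> ia bj; case/orP: rij => // lij; exfalso.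
have [a [b [ha hb ea eb]]] := psi_x_edge_ends; rewrite ea eb in ia bj.
have ab : cross_linked a b by rewrite (cross_linked_psiA _ hc' ha) mc.
have lt_ab : a < b by apply: (psiA_lt _ hc ha hb); lia.
have laj : linked a j.
  case: (ltngtP i a) ia => [ltia _|//|/val_inj<- _ //].
  by apply: (@linked_trans i); rewrite // linked_sym; apply: linked_nc lij ab; lia.
have /leq_maxs : j \in A c.-1 by rewrite (psiA_pclassE hc' ha).1 mem_pclass.
by rewrite ea; lia.
Qed.

Lemma psi_x_edge_redge : exists a b : 'I_n,
  [/\ maxs (A c.-1) = a, mins (A c) = b & redge sigma_linked a b].
Proof.
have [a [b [ha hb ea eb]]] := psi_x_edge_ends; exists a, b; split => //.
have ab : cross_linked a b by rewrite (cross_linked_psiA _ hc' ha) mc.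
split; [by apply: (psiA_lt _ hc ha hb); lia | by rewrite /sigma_linked ab orbT |].
move=> k /orP[ak|ak]; apply/negP => /andP[lt_ak lt_kb].
- have /leq_maxs : k \in A c.-1 by rewrite (psiA_pclassE hc' ha).1 mem_pclass.
  by rewrite ea; lia.
- have /geq_mins : k \in A c by rewrite -mc -(cross_linked_psiA _ hc' ha).
  by rewrite eb; lia.
Qed.

End EvenM.

Lemma cross_linked_region i j : sigma_linked i j -> i <= j ->
  cross_linked i j = region (psi_x P) i j.
Proof.
move=> rij le_ij; rewrite /psi_x; case: eqP => [m0|/eqP m0]; first exact: cross_linked_m0.
by case: ifP => om; [apply: cross_linked_odd | apply: cross_linked_even => //; rewrite om].
Qed.

Inductive psi_x_spec : xdata n -> Prop :=
  | PsiXEmpty : psi_x_spec XEmpty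
  | PsiXEdge (a b : 'I_n) : redge sigma_linked a b -> psi_x_spec (XEdge a b)
  | PsiXBlock Z : Z \in psi_sigma P -> Z != set0 -> psi_x_spec (XBlock Z).

Lemma psi_xP : psi_x_spec (psi_x P).
Proof.
rewrite /psi_x; case: eqP => [_|/eqP m0]; first exact: PsiXEmpty.
case: ifP => om.
- have := odd_double_half m; rewrite om -addnn /= => em.
  have hc : m./2 < m by lia.
  apply: PsiXBlock; last by have [z hz] := psiA_nonempty hc; apply/set0Pn; exists z.
  rewrite /psi_sigma inE; apply/orP; right; apply/imsetP; exists (Ordinal hc) => //=.
  by rewrite (_ : m.-1 - m./2 = m./2) ?setUid //; lia.
- have [a [b [-> -> ab]]] := psi_x_edge_redge m0 (negbT om).
  exact: PsiXEdge.
Qed.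

End TypeBPartition.

(* Refinement in terms of regions (lemma refines_region_compat).  The diagonal test
   exempts the self-paired block {i | i ~ -i}, on which i ~ j and i ~ -j hold together. *)
Definition region_compat n (r : rel 'I_n) (x1 x2 : xdata n) :=
  forall i j : 'I_n, r i j -> i <= j ->
    (region x1 i j -> region x2 i j) /\ (region x2 i j -> ~~ region x2 i i -> region x1 i j).

Section EdgeOrEmpty.
Variables (n : nat) (S : {set {set 'I_n}}) (Q : nat -> nat -> Prop).

Lemma unique_min_edge_or_empty0 :
  unique_min_edge_or_empty S Q XEmpty <-> ~ exists i j, is_edge S i j /\ Q i j.
Proof. by split=> [[[] // | [i [j []]]] | no]; [|left]. Qed.

Lemma unique_min_edge_or_emptyE a b : unique_min_edge_or_empty S Q (XEdge a b) <->
  [/\ is_edge S a b, Q a b &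
      forall k l, is_edge S k l -> Q k l -> (k, l) <> (a, b) -> b - a < l - k].
Proof. by split=> [[[]//|[? [? [[-> ->]]]]]|[]]; last (right; exists a, b). Qed.

Lemma unique_min_edge_or_empty_block Z : ~ unique_min_edge_or_empty S Q (XBlock Z).
Proof. by case=> [[]|[? [? []]]]. Qed.

Lemma min_edge_or_empty0 :
  min_edge_or_empty S Q XEmpty <-> ~ exists i j, is_edge S i j /\ Q i j.
Proof. by split=> [[[] // | [i [j []]]] | no]; [|left]. Qed.

Lemma min_edge_or_emptyE a b : min_edge_or_empty S Q (XEdge a b) <->
  [/\ is_edge S a b, Q a b & forall k l, is_edge S k l -> Q k l -> b - a <= l - k].
Proof. by split=> [[[]//|[? [? [[-> ->]]]]]|[]]; last (right; exists a, b). Qed.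

Lemma min_edge_or_empty_block Z : ~ min_edge_or_empty S Q (XBlock Z).
Proof. by case=> [[]|[? [? []]]]. Qed.

End EdgeOrEmpty.

Definition psi_x_le n (S1 S2 : {set {set 'I_n}}) (x1 x2 : xdata n) : Prop :=
  (x1 = XEmpty /\ x2 = XEmpty)
  \/ (exists a b, x2 = XEdge a b /\ is_edge S2 a b /\
        unique_min_edge_or_empty S1 (fun i j => i <= a /\ b <= j) x1)
  \/ (exists B2 B1, x2 = XBlock B2 /\ B2 \in S2 /\ x1 = XBlock B1 /\ B1 \in S1 /\ B1 \subset B2)
  \/ (exists B2 i j, x2 = XBlock B2 /\ B2 \in S2 /\ x1 = XEdge i j /\ is_edge S1 i j /\
        exists i' j' : 'I_n, i' = i :> nat /\ j' = j :> nat /\ i' \in B2 /\ j' \in B2)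
  \/ (exists B2, x2 = XBlock B2 /\ B2 \in S2 /\
        min_edge_or_empty S1 (fun i j => i < mins B2 /\ maxs B2 < j) x1).

Section PsiXLe.
Variables (n : nat) (S1 S2 : {set {set 'I_n}}) (x1 : xdata n).

Lemma psi_x_le_empty : psi_x_le S1 S2 x1 XEmpty <-> x1 = XEmpty.
Proof.
split=> [|->]; last by left.
by case=> [[]//|[[? [? []]]|[[? [? []]]|[[? [? [? []]]]|[? []]]]]].
Qed.

Lemma psi_x_le_edge (a b : nat) : psi_x_le S1 S2 x1 (XEdge a b) <->
  is_edge S2 a b /\ unique_min_edge_or_empty S1 (fun i j => i <= a /\ b <= j) x1.
Proof.
split=> [|[ab u]]; last by right; left; exists a, b.
by case=> [[_ e]|[[? [? [[-> ->]]]]|[[? [? [e _]]]|[[? [? [? [e _]]]]|[? [e _]]]]]].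
Qed.

Lemma psi_x_le_block Z : psi_x_le S1 S2 x1 (XBlock Z) <-> Z \in S2 /\
  [\/ exists B1, x1 = XBlock B1 /\ B1 \in S1 /\ B1 \subset Z,
      exists i j, x1 = XEdge i j /\ is_edge S1 i j /\
        exists i' j' : 'I_n, i' = i :> nat /\ j' = j :> nat /\ i' \in Z /\ j' \in Z
    | min_edge_or_empty S1 (fun i j => i < mins Z /\ maxs Z < j) x1].
Proof.
split=> [|[hZ []]].
- case=> [[_ e]|[[? [? [e _]]]|[[? [B1 [[<-] [hZ [e1 hB1]]]]]|[[? [i [j [[<-] [hZ h]]]]]|[? [[<-] [hZ h]]]]]]] //.
  + by split=> //; apply: Or31; exists B1.
  + by split=> //; apply: Or32; exists i, j.
  + by split=> //; apply: Or33.
- by case=> B1 h; right; right; left; exists Z, B1.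
- by case=> i [j h]; right; right; right; left; exists Z, i, j.
- by move=> h; right; right; right; right; exists Z.
Qed.

End PsiXLe.

Section Comparison.
Variables (n : nat) (P1 P2 : {set {set 'I_(n + n)}}).
Hypotheses (P1_NCB : is_NCB P1) (P2_NCB : is_NCB P2).

Local Notation r1 := (sigma_linked P1).
Local Notation r2 := (sigma_linked P2).

Lemma refinesE : refines P1 P2 <-> forall i j,
  (linked P1 i j -> linked P2 i j) /\ (cross_linked P1 i j -> cross_linked P2 i j).
Proof.
split=> [le12 i j | le12 B hB].
  have [C hC subC] := le12 _ (pblockP P1_NCB (posI i)).
  have eC : pblock P2 (posI i) = C by apply: pblock_eq (subsetP subC _ (pblock_self _ _)).
  by subst C; split=> h; apply: (subsetP subC).
have same12 u v : same_block P1 u v -> same_block P2 u v.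
  case: (posI_or_negI u) (posI_or_negI v) => [][i ->] [][j ->]; first exact: (le12 i j).1.
  - exact: (le12 i j).2.
  - by rewrite !(same_block_sym _ (negI i)) //; exact: (le12 j i).2.
  - by rewrite -!negB_posI !same_block_negB //; exact: (le12 i j).1.
have [u hu] : exists u, u \in B.
  case: P1_NCB => /and3P[_ _ nP0] _ _ _; apply/set0Pn.
  by apply: contraNneq nP0 => <-.
exists (pblock P2 u); first exact: pblockP.
by apply/subsetP => v hv; apply: same12; rewrite /same_block (pblock_eq P1_NCB hB hu).
Qed.

Lemma refines_psi_sigmaE : 0 < n ->
  refines (psi_sigma P1) (psi_sigma P2) <-> subrel r1 r2.
Proof.
move=> npos; split=> [le12 i j rij | le12 S hS].
  have [T hT subT] := le12 _ (sclass_psi_sigma P1_NCB i).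
  have hiT : i \in T by apply: (subsetP subT); rewrite inE sigma_linked_refl.
  by move: (subsetP subT j); rewrite inE (psi_sigma_blockE P2_NCB hT hiT) inE; apply.
have [S0|[i hi]] := set_0Vmem S.
  by exists (sclass P2 (Ordinal npos)); rewrite ?S0 ?sub0set ?sclass_psi_sigma.
exists (sclass P2 i); first exact: sclass_psi_sigma.
by rewrite (psi_sigma_blockE P1_NCB hS hi); apply/subsetP => j; rewrite !inE; apply: le12.
Qed.

Hypothesis r12 : subrel r1 r2.
Local Notation x1 := (psi_x P1).
Local Notation x2 := (psi_x P2).

Lemma refines_region_compat :
  (forall i j, (linked P1 i j -> linked P2 i j) /\ (cross_linked P1 i j -> cross_linked P2 i j))
  <-> region_compat r1 x1 x2.
Proof.
have reg1 i j : r1 i j -> i <= j -> region x1 i j = cross_linked P1 i j.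
  by move=> rij le_ij; rewrite (cross_linked_region P1_NCB rij le_ij).
have reg2 i j : r1 i j -> i <= j -> region x2 i j = cross_linked P2 i j.
  by move=> rij le_ij; rewrite (cross_linked_region P2_NCB (r12 rij) le_ij).
have rii i : r1 i i := sigma_linked_refl P1_NCB i.
split=> [le12 i j rij le_ij | compat].
  rewrite !reg1 // !reg2 //; split=> [|c2 nc2]; first exact: (le12 i j).2.
  apply/negPn/negP => nc1.
  have /(le12 i j).1 l2 : linked P1 i j by rewrite (linkedE P1_NCB rij) nc1.
  by rewrite (linked_cross_self P2_NCB l2 c2) in nc2.
suff le12 (i j : 'I_n) : i <= j -> (linked P1 i j -> linked P2 i j) /\ (cross_linked P1 i j -> cross_linked P2 i j).
  move=> i j; case: (leqP i j) => [/le12 // | /ltnW /le12].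
  by rewrite (linked_sym P1_NCB i) (linked_sym P2_NCB i) (cross_linked_sym P1_NCB i) (cross_linked_sym P2_NCB i).
move=> le_ij; split=> [l1|c1]; last first.
  have rij : r1 i j by rewrite /sigma_linked c1 orbT.
  by rewrite -reg2 //; apply: (compat i j rij le_ij).1; rewrite reg1.
have rij : r1 i j by rewrite /sigma_linked l1.
rewrite (linkedE P2_NCB (r12 rij)); case: (boolP (cross_linked P2 i j)) => //= c2.
apply/negPn/negP => nc2.
have c1 : cross_linked P1 i j.
  by rewrite -reg1 //; apply: (compat i j rij le_ij).2; rewrite reg2.
move: nc2; rewrite -reg2 //; apply/negP/negPn.
by apply: (compat i i (rii i) (leqnn i)).1; rewrite reg1 // (linked_cross_self P1_NCB l1 c1).
Qed.

Lemma redge_spanned (a b i j : 'I_n) : redge r2 a b -> r1 i j -> i <= a -> b <= j ->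
  exists k l, [/\ redge r1 k l, i <= k, k <= a, b <= l & l <= j].
Proof.
move=> ab rij ia bj; case: (ab) => lt_ab _ _.
apply: (redge_between (sigma_linked_nce P1_NCB) rij ia lt_ab bj) => t rit.
exact: (redge_sep (sigma_linked_nce P2_NCB) ab (r12 rit)) ia.
Qed.

Lemma class_spanned Z (i j : 'I_n) : Z \in psi_sigma P2 -> Z != set0 ->
  r1 i j -> i < mins Z -> maxs Z < j ->
  exists k l, [/\ redge r1 k l, i <= k, k < mins Z, maxs Z < l & l <= j].
Proof.
move=> hZ /set0Pn[z hz] rij i_lt j_gt; have := geq_mins hz; have := leq_maxs hz => zM mz.
have [||||k [l [kl ik ka bl lj]]] := redge_between (sigma_linked_nce P1_NCB) (a := (mins Z).-1) (b := (maxs Z).+1) rij; try lia.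
  move=> t rit; have := class_sep (sigma_linked_nce P2_NCB) (psi_sigma_rclass P2_NCB hZ) (r12 rit) i_lt.
  lia.
by exists k, l; split => //; lia.
Qed.

Lemma region_compat_empty : region_compat r1 x1 XEmpty <-> x1 = XEmpty.
Proof.
split=> [compat | -> //]; case: (psi_xP P1_NCB) compat => // [a b [lt_ab rab _] | Z _ /set0Pn[z hz]] compat.
- by have [/(_ _)] := compat a b rab (ltnW lt_ab); rewrite /= !leqnn => /(_ isT).
- by have [/(_ _)] := compat z z (sigma_linked_refl P1_NCB z) (leqnn z); rewrite /= hz => /(_ isT).
Qed.

Lemma is_edge_redge (k l : nat) : is_edge (psi_sigma P1) k l ->
  exists k' l' : 'I_n, [/\ k = k', l = l' & redge r1 k' l'].
Proof. exact: (is_edge_psi_sigmaE P1_NCB k l).1. Qed.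

Lemma redge_is_edge (k l : 'I_n) : redge r1 k l -> is_edge (psi_sigma P1) k l.
Proof. by move=> kl; apply/(is_edge_psi_sigmaE P1_NCB); exists k, l. Qed.

Section EdgeTarget.
Variables (a b : 'I_n).
Hypothesis ab : redge r2 a b.

Let not_region_diag (i : 'I_n) : ~~ region (XEdge a b) i i.
Proof. by case: ab => lt_ab _ _; rewrite /=; lia. Qed.

Lemma region_compat_edge_empty : region_compat r1 XEmpty (XEdge a b) <->
  ~ exists k l, is_edge (psi_sigma P1) k l /\ (k <= a /\ b <= l).
Proof.
split=> [compat [_ [_ [/is_edge_redge[k [l [-> -> kl]]] [ka bl]]]] | no_edge i j rij le_ij].
  case: (kl) => lt_kl rkl _; have [_ /(_ _ (not_region_diag k))] := compat k l rkl (ltnW lt_kl).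
  by rewrite /= ka bl => /(_ isT).
split=> // /andP[ia bj] _; have [k [l [kl ik ka bl lj]]] := redge_spanned ab rij ia bj.
by case: no_edge; exists k, l; split; [exact: redge_is_edge | split].
Qed.

Lemma region_compat_edge_edge (a1 b1 : 'I_n) : redge r1 a1 b1 ->
  region_compat r1 (XEdge a1 b1) (XEdge a b) <->
  (a1 <= a /\ b <= b1) /\ (forall k l, is_edge (psi_sigma P1) k l -> k <= a /\ b <= l ->
                           (k, l) <> (a1 : nat, b1 : nat) -> b1 - a1 < l - k).
Proof.
move=> ab1; case: (ab1) => lt_ab1 rab1 _; case: (ab) => lt_ab _ _.
split=> [compat | [[a1a bb1] uniq] i j rij le_ij].
  have [/(_ _)] := compat a1 b1 rab1 (ltnW lt_ab1); rewrite /= !leqnn => /(_ isT) /andP[a1a bb1].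
  split=> // _ _ /is_edge_redge[k [l [-> -> [lt_kl rkl _]]]] [ka bl] ne.
  have [_ /(_ _ (not_region_diag k))] := compat k l rkl (ltnW lt_kl).
  rewrite /= ka bl => /(_ isT) /andP[ka1 b1l].
  by case: (eqVneq (k : nat) a1) ne => [-> | ?]; case: (eqVneq (l : nat) b1) => [-> | ?] //; lia.
split=> /andP[ia bj] => [|_]; first by rewrite /=; lia.
have [k [l [kl ik ka bl lj]]] := redge_spanned ab rij ia bj.
have [||[ka1 b1l]|[a1k lb1]] := redge_nested (sigma_linked_nce P1_NCB) kl ab1; rewrite /=; try lia.
case: (boolP ((k == a1 :> nat) && (l == b1 :> nat))) => [/andP[/eqP ek /eqP el] | ne]; first lia.
have : (k : nat, l : nat) <> (a1 : nat, b1 : nat) by case=> ek el; rewrite ek el !eqxx in ne.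
by move/(uniq k l (redge_is_edge kl) (conj ka bl)); lia.
Qed.

End EdgeTarget.

Section BlockTarget.
Variable Z : {set 'I_n}.
Hypotheses (hZ : Z \in psi_sigma P2) (nZ : Z != set0).

Let Z_class : rclass r2 Z := psi_sigma_rclass P2_NCB hZ.
Let mins_le_maxs : mins Z <= maxs Z.
Proof. by case/set0Pn: nZ => z hz; apply: leq_trans (geq_mins hz) (leq_maxs hz). Qed.

Lemma region_compat_blockE x1 : region_compat r1 x1 (XBlock Z) <->
  forall i j, r1 i j -> i <= j ->
    (region x1 i j -> region (XBlock Z) i j) /\ (i < mins Z -> maxs Z < j -> region x1 i j).
Proof.
have diag (i : 'I_n) : region (XBlock Z) i i = (i \in Z).
  rewrite /= andbb; case: (i \in Z) => //=; apply/negbTE/negP => /andP[]; lia.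
have notZ (i : 'I_n) : i < mins Z -> i \notin Z by rewrite ltnNge; apply: contra => /geq_mins.
split=> compat i j rij le_ij; have [c1 c2] := compat i j rij le_ij; split=> //.
  by move=> iZ jZ; apply: c2; [rewrite /= iZ jZ orbT | rewrite diag notZ].
move=> /orP[/andP[iZ jZ]|/andP[iZ jZ]]; first by rewrite diag iZ.
by move=> _; apply: c2.
Qed.

Lemma region_compat_block_empty : region_compat r1 XEmpty (XBlock Z) <->
  ~ exists k l, is_edge (psi_sigma P1) k l /\ (k < mins Z /\ maxs Z < l).
Proof.
apply: iff_trans (region_compat_blockE _) _.
split=> [compat [_ [_ [/is_edge_redge[k [l [-> -> [lt_kl rkl _]]]] [kZ Zl]]]] | no_edge i j rij le_ij].
  by have [_ /(_ kZ Zl)] := compat k l rkl (ltnW lt_kl).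
split=> // iZ Zj; have [k [l [kl _ kZ Zl _]]] := class_spanned hZ nZ rij iZ Zj.
by case: no_edge; exists k, l; split; [exact: redge_is_edge | split].
Qed.

Lemma region_compat_block_block Z1 : Z1 != set0 ->
  region_compat r1 (XBlock Z1) (XBlock Z) <-> Z1 \subset Z.
Proof.
move=> /set0Pn[z1 hz1]; apply: iff_trans (region_compat_blockE _) _.
split=> [compat | sub i j rij le_ij].
  apply/subsetP => z hz; have [/(_ _)] := compat z z (sigma_linked_refl P1_NCB z) (leqnn z).
  by rewrite /= hz => /(_ isT) /orP[/andP[]//|/andP[]]; lia.
have [zm hzm ezm] := mins_mem hz1; have [zM hzM ezM] := maxs_mem hz1.
have zmZ := subsetP sub _ hzm; have := geq_mins zmZ; have := leq_maxs (subsetP sub _ hzM).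
move=> ZzM Zzm; split=> [/orP[/andP[iZ1 jZ1]|/andP[iZ1 Z1j]] | iZ Zj].
- by rewrite /= (subsetP sub _ iZ1) (subsetP sub _ jZ1).
- case: (boolP (r2 i zm)) => [rizm | nrizm].
    have iZ : i \in Z by rewrite (Z_class _ zmZ) sigma_linked_sym.
    by rewrite /= iZ (Z_class _ iZ) (r12 rij).
  have [||iZ Zj] := class_enclosed (sigma_linked_nce P2_NCB) Z_class zmZ (r12 rij) _ _ nrizm.
  + lia.
  + by have := leq_maxs hzm; lia.
  + by rewrite /= iZ Zj orbT.
- by rewrite /= ezm ezM; apply/orP; right; lia.
Qed.

Section EdgeSource.
Variables (a1 b1 : 'I_n).
Hypothesis ab1 : redge r1 a1 b1.

Let lt_ab1 : a1 < b1. Proof. by case: ab1. Qed.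

Lemma region_compat_block_edge_inside : a1 \in Z -> b1 \in Z ->
  region_compat r1 (XEdge a1 b1) (XBlock Z).
Proof.
move=> a1Z b1Z; apply/region_compat_blockE => i j rij le_ij.
have := geq_mins a1Z; have := leq_maxs b1Z => Zb1 Za1.
split=> [/andP[ia1 b1j] | iZ Zj]; last by rewrite /=; lia.
case: (boolP (r2 i a1)) => [ria1 | nria1].
  have iZ : i \in Z by rewrite (Z_class _ a1Z) sigma_linked_sym.
  by rewrite /= iZ (Z_class _ iZ) (r12 rij).
have lt_ia1 : i < a1.
  by rewrite ltn_neqAle ia1 andbT; apply: contraNneq nria1 => /val_inj ->; rewrite sigma_linked_refl.
have [|iZ Zj] := class_enclosed (sigma_linked_nce P2_NCB) Z_class a1Z (r12 rij) lt_ia1 _ nria1.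
  lia.
by rewrite /= iZ Zj orbT.
Qed.

Lemma region_compat_block_edge_outside : a1 < mins Z -> maxs Z < b1 ->
  (forall k l, is_edge (psi_sigma P1) k l -> k < mins Z /\ maxs Z < l -> b1 - a1 <= l - k) ->
  region_compat r1 (XEdge a1 b1) (XBlock Z).
Proof.
move=> a1Z Zb1 min_ab1; apply/region_compat_blockE => i j rij le_ij.
split=> [/andP[ia1 b1j] | iZ Zj]; first by rewrite /=; lia.
have [k [l [kl ik kZ Zl lj]]] := class_spanned hZ nZ rij iZ Zj.
have [||[ka1 b1l]|[a1k lb1]] := redge_nested (sigma_linked_nce P1_NCB) kl ab1; rewrite /=; try lia.
by have := min_ab1 k l (redge_is_edge kl) (conj kZ Zl); lia.
Qed.

Lemma region_compat_block_edge : region_compat r1 (XEdge a1 b1) (XBlock Z) <->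
  (a1 \in Z /\ b1 \in Z) \/
  ((a1 < mins Z /\ maxs Z < b1) /\
   forall k l, is_edge (psi_sigma P1) k l -> k < mins Z /\ maxs Z < l -> b1 - a1 <= l - k).
Proof.
split=> [compat | [[a1Z b1Z] | [[a1Z Zb1] min_ab1]]]; last first.
- exact: region_compat_block_edge_outside.
- exact: region_compat_block_edge_inside.
have [_ rab1 _] := ab1; have compat' := (region_compat_blockE _).1 compat.
have [/(_ _)] := compat' a1 b1 rab1 (ltnW lt_ab1); rewrite /= !leqnn => /(_ isT).
case/orP=> /andP[h1 h2]; [by left | right; split => //].
move=> _ _ /is_edge_redge[k [l [-> -> [lt_kl rkl _]]]] [kZ Zl].
by have [_ /(_ kZ Zl) /andP[]] := compat' k l rkl (ltnW lt_kl); lia.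
Qed.

End EdgeSource.

End BlockTarget.

Lemma region_compat_edge (a b : 'I_n) : redge r2 a b ->
  region_compat r1 x1 (XEdge a b) <->
  unique_min_edge_or_empty (psi_sigma P1) (fun i j => i <= a /\ b <= j) x1.
Proof.
move=> ab; case: (psi_xP P1_NCB) => [|a1 b1 ab1|Z1 _ /set0Pn[z hz]].
- exact: iff_trans (region_compat_edge_empty ab) (iff_sym (unique_min_edge_or_empty0 _ _)).
- apply: iff_trans (region_compat_edge_edge ab ab1) _.
  apply: iff_trans _ (iff_sym (unique_min_edge_or_emptyE _ _ _ _)).
  by split=> [[[? ?] ?] | [_ [? ?] ?]]; split => //; exact: redge_is_edge.
- split=> [compat | /unique_min_edge_or_empty_block //]; exfalso.
  case: ab => lt_ab _ _; have [/(_ _)] := compat z z (sigma_linked_refl P1_NCB z) (leqnn z).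
  by rewrite /= hz => /(_ isT) /andP[]; lia.
Qed.

Lemma region_compat_block Z : Z \in psi_sigma P2 -> Z != set0 ->
  region_compat r1 x1 (XBlock Z) <->
  [\/ exists B1, x1 = XBlock B1 /\ B1 \in psi_sigma P1 /\ B1 \subset Z,
      exists i j, x1 = XEdge i j /\ is_edge (psi_sigma P1) i j /\
        exists i' j' : 'I_n, i' = i :> nat /\ j' = j :> nat /\ i' \in Z /\ j' \in Z
    | min_edge_or_empty (psi_sigma P1) (fun i j => i < mins Z /\ maxs Z < j) x1].
Proof.
move=> hZ nZ; case: (psi_xP P1_NCB) => [|a1 b1 ab1|Z1 hZ1 nZ1].
- apply: iff_trans (region_compat_block_empty hZ nZ) _.
  split=> [no|[[? [e _]]|[? [? [e _]]]|/min_edge_or_empty0 //]] //.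
  by apply/Or33/min_edge_or_empty0.
- apply: iff_trans (region_compat_block_edge hZ nZ ab1) _.
  split=> [[inZ|[out min_ab1]]|[[? [e _]]|[? [? [[<- <-] [_ [i' [j' [/val_inj-> [/val_inj-> inZ]]]]]]]]|]] //.
  + by apply: Or32; exists a1, b1; split; [|split; [exact: redge_is_edge | exists a1, b1]].
  + by apply/Or33/min_edge_or_emptyE; split=> //; exact: redge_is_edge.
  + by left.
  + by case/min_edge_or_emptyE => _ out min_ab1; right.
- apply: iff_trans (region_compat_block_block hZ nZ nZ1) _.
  split=> [sub|[[? [[<-] [_ sub]]]|[? [? [e _]]]|/min_edge_or_empty_block //]] //.
  by apply: Or31; exists Z1.
Qed.

Lemma region_compat_psi_x :
  region_compat r1 x1 x2 <-> psi_x_le (psi_sigma P1) (psi_sigma P2) x1 x2.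
Proof.
case: (psi_xP P2_NCB) => [|a b ab|Z hZ nZ].
- exact: iff_trans region_compat_empty (iff_sym (psi_x_le_empty _ _ _)).
- apply: iff_trans (region_compat_edge ab) _; apply: iff_trans _ (iff_sym (psi_x_le_edge _ _ _ _ _)).
  by split=> [|[]//]; split=> //; apply/(is_edge_psi_sigmaE P2_NCB); exists a, b.
- apply: iff_trans (region_compat_block hZ nZ) _; apply: iff_trans _ (iff_sym (psi_x_le_block _ _ _ _)).
  by split=> [|[]//]; split.
Qed.

End Comparison.

Theorem proposition3p4 (n : nat) (npos : 0 < n)
    (pi1 pi2 : {set {set 'I_(n + n)}}) :
  is_NCB pi1 -> is_NCB pi2 ->
  (refines pi1 pi2 <->
   refines (psi_sigma pi1) (psi_sigma pi2) /\
   ( (* (1) *)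
     (psi_x pi1 = XEmpty /\ psi_x pi2 = XEmpty)
   \/ (* (2) *)
     (exists a b, psi_x pi2 = XEdge a b /\ is_edge (psi_sigma pi2) a b /\
        unique_min_edge_or_empty (psi_sigma pi1)
          (fun i j => i <= a /\ b <= j) (psi_x pi1))
   \/ (* (3) *)
     (exists B2 B1, psi_x pi2 = XBlock B2 /\ B2 \in psi_sigma pi2 /\
        psi_x pi1 = XBlock B1 /\ B1 \in psi_sigma pi1 /\ B1 \subset B2)
   \/ (* (4) *)
     (exists B2 i j, psi_x pi2 = XBlock B2 /\ B2 \in psi_sigma pi2 /\
        psi_x pi1 = XEdge i j /\ is_edge (psi_sigma pi1) i j /\
        exists i' j' : 'I_n, i' = i :> nat /\ j' = j :> nat /\
                             i' \in B2 /\ j' \in B2)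
   \/ (* (5) *)
     (exists B2, psi_x pi2 = XBlock B2 /\ B2 \in psi_sigma pi2 /\
        min_edge_or_empty (psi_sigma pi1)
          (fun i j => i < mins B2 /\ maxs B2 < j) (psi_x pi1)))).
Proof.
move=> P1_NCB P2_NCB; apply: iff_trans (refinesE P1_NCB P2_NCB) _.
have sigmaE := refines_psi_sigmaE P1_NCB P2_NCB npos.
split=> [le12 | [/sigmaE r12 le_x]].
  have r12 : subrel (sigma_linked pi1) (sigma_linked pi2).
    by move=> i j /orP[] h; apply/orP; [left; apply: (le12 i j).1 | right; apply: (le12 i j).2].
  split; first exact/sigmaE.
  by apply/(region_compat_psi_x P1_NCB P2_NCB r12)/(refines_region_compat P1_NCB P2_NCB r12).
by apply/(refines_region_compat P1_NCB P2_NCB r12)/(region_compat_psi_x P1_NCB P2_NCB r12).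
Qed.
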